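(* Let $L=(l_1,\dots,l_n)$, $n\ge 4$, be a generic length vector satisfying the strict triangle inequality, and let $l_a\ge l_b\ge l_c$ be its three largest entries (for distinct indices $a,b,c$). Suppose $l_b+l_c>|L|/2$. Then for every vertex $(I,J,K)$ of $\Gamma(L)$, the vertices $(I,J,K)$ and $(J,I,K)$ lie in different connected components of $\Gamma(L)$; i.e. no path in $\Gamma(L)$ connects them.
   Context: Let $n\ge 4$ and $L=(l_1,\dots,l_n)$ be positive reals with $l_i<\sum_{j\ne i}l_j$ for every $i$ (strict triangle inequality), and generic: there is no $J\subseteq[n]$ with $\sum_{i\in J}l_i=\sum_{i\notin J}l_i$. Here $[n]=\{1,\dots,n\}$ and $|L|=\sum_{i=1}^n l_i$. A set $I\subseteq[n]$ is short if $\sum_{i\in I}l_i<|L|/2$ and long otherwise. A cyclically ordered partition of $[n]$ into $k$ parts is a sequence $(A_1,\dots,A_k)$ of pairwise disjoint nonempty sets with union $[n]$, considered up to cyclic shifts $(A_1,\dots,A_k)\sim(A_2,\dots,A_k,A_1)$; there is no ordering inside a part. It is admissible if every part is short. The graph $\Gamma(L)$ has as vertices the admissible cyclically ordered partitions of $[n]$ into 3 parts, written $(I,J,K)$, and as edges the admissible cyclically ordered partitions into 4 parts $(A,B,C,D)$; such an edge is incident to each of the partitions $(A\cup B,C,D)$, $(A,B\cup C,D)$, $(A,B,C\cup D)$, $(D\cup A,B,C)$ that is admissible. Equivalently, two vertices are adjacent iff one is obtained from the other by moving a nonempty proper subset of one part into another part. The mirror image of a vertex $(I,J,K)$ is the vertex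 $(J,I,K)$ (same parts, reversed cyclic order). (The condition $l_b+l_c>|L|/2$ is equivalent to disconnectedness of the moduli space of planar configurations of $L$.) *)

From HB Require Import structures.
From mathcomp Require Import all_boot all_order all_algebra.
From Stdlib Require Import Relations.
Set Implicit Arguments. Unset Strict Implicit. Unset Printing Implicit Defensive.
Import Order.TTheory GRing.Theory Num.Theory.
Local Open Scope ring_scope.

Definition Ltotal (R : realFieldType) (n : nat) (l : 'I_n -> R) : R := \sum_i l i.

Definition short (R : realFieldType) (n : nat) (l : 'I_n -> R) (I : {set 'I_n}) : bool :=
  \sum_(i in I) l i < Ltotal l / 2%:R.

Definition opart (n : nat) (s : seq {set 'I_n}) : bool :=
  all (fun A : {set 'I_n} => A != set0) s &&
  pairwise (fun A B : {set 'I_n} => [disjoint A & B]) s &&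
  (\bigcup_(A <- s) A == setT).

Definition admissible (R : realFieldType) (n : nat) (l : 'I_n -> R)
  (s : seq {set 'I_n}) : bool := opart s && all (fun A : {set 'I_n} => short l A) s.

Definition cyc_eq (n : nat) (s t : seq {set 'I_n}) : Prop := exists k, t = rot k s.

(* vertices of Gamma(L): (representatives of) admissible cyclically ordered
   partitions into 3 parts *)
Definition vertex (R : realFieldType) (n : nat) (l : 'I_n -> R) (s : seq {set 'I_n}) : Prop :=
  size s = 3%N /\ admissible l s.

Definition merges (n : nat) (A B C D : {set 'I_n}) : seq (seq {set 'I_n}) :=
  [:: [:: A :|: B; C; D]; [:: A; B :|: C; D]; [:: A; B; C :|: D]; [:: D :|: A; B; C]].

Definition incident (R : realFieldType) (n : nat) (l : 'I_n -> R)
  (A B C D : {set 'I_n}) (s : seq {set 'I_n}) : Prop :=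
  exists2 m, m \in merges A B C D & admissible l m /\ cyc_eq m s.

Definition adjacent (R : realFieldType) (n : nat) (l : 'I_n -> R)
  (s t : seq {set 'I_n}) : Prop :=
  exists A B C D : {set 'I_n},
    admissible l [:: A; B; C; D] /\ incident l A B C D s /\ incident l A B C D t.

(* one step: an edge, or passing to another representative of the same vertex *)
Definition gstep (R : realFieldType) (n : nat) (l : 'I_n -> R)
  (s t : seq {set 'I_n}) : Prop :=
  adjacent l s t \/ (vertex l s /\ cyc_eq s t).

Definition gconnected (R : realFieldType) (n : nat) (l : 'I_n -> R)
  (s t : seq {set 'I_n}) : Prop :=
  clos_refl_trans _ (gstep l) s t.

From HB Require Import structures.
From mathcomp Require Import all_boot all_order all_algebra.
From mathcomp Require Import lra.
From Stdlib Require Import Relations.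
Set Implicit Arguments. Unset Strict Implicit. Unset Printing Implicit Defensive.
Import Order.TTheory GRing.Theory Num.Theory.
Local Open Scope ring_scope.

(* Since l_a >= l_b >= l_c, any two of the three largest lengths sum to more
   than |L|/2, so no short set contains two of a, b, c.  Hence every admissible
   partition puts a, b, c into three different parts, and a 3-part cyclically
   ordered partition (X, Y, Z) induces a cyclic orientation of (a, b, c): either
   a, b, c meet X, Y, Z in this cyclic order or in the reverse one.  It follows that the
   orientation is constant along the edges of Gamma(L), hence on connected
   components, while (I, J, K) and (J, I, K) have opposite orientations. *)

Lemma rot_seq3 {T : Type} (x y z : T) (k : nat) :
  [\/ rot k [:: x; y; z] = [:: x; y; z], rot k [:: x; y; z] = [:: y; z; x]
    | rot k [:: x; y; z] = [:: z; x; y]].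
Proof.
case: k => [|[|[|k]]]; [by constructor 1 | by constructor 2 | by constructor 3 |].
by constructor 1; rewrite rot_oversize.
Qed.

Section Orientation.
Variables (n : nat) (a b c : 'I_n).

Definition splits (A : {set 'I_n}) : bool :=
  ~~ [|| (a \in A) && (b \in A), (a \in A) && (c \in A) | (b \in A) && (c \in A)].

Definition separates3 (X Y Z : {set 'I_n}) : bool :=
  [&& [|| a \in X, a \in Y | a \in Z], [|| b \in X, b \in Y | b \in Z],
      [|| c \in X, c \in Y | c \in Z], splits X, splits Y & splits Z].

Definition cyc3 (X Y Z : {set 'I_n}) : bool :=
  [|| [&& a \in X, b \in Y & c \in Z], [&& a \in Y, b \in Z & c \in X]
    | [&& a \in Z, b \in X & c \in Y]].

Definition cyc4 (A B C D : {set 'I_n}) : bool :=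
  [|| cyc3 A B C, cyc3 A B D, cyc3 A C D | cyc3 B C D].

Definition oriented (s : seq {set 'I_n}) : bool :=
  if s is [:: X; Y; Z] then cyc3 X Y Z else false.

Lemma cyc3_rot (X Y Z : {set 'I_n}) : cyc3 Y Z X = cyc3 X Y Z.
Proof.
rewrite /cyc3.
move: (a \in X) (a \in Y) (a \in Z) (b \in X) (b \in Y) (b \in Z)
  (c \in X) (c \in Y) (c \in Z).
by do 9!case.
Qed.

Lemma separates3_rot (X Y Z : {set 'I_n}) : separates3 Y Z X = separates3 X Y Z.
Proof.
rewrite /separates3 /splits.
move: (a \in X) (a \in Y) (a \in Z) (b \in X) (b \in Y) (b \in Z)
  (c \in X) (c \in Y) (c \in Z).
by do 9!case.
Qed.

Lemma cyc4_rot (A B C D : {set 'I_n}) : cyc4 B C D A = cyc4 A B C D.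
Proof.
rewrite /cyc4 (cyc3_rot A B C) (cyc3_rot A B D) (cyc3_rot A C D).
by case: (cyc3 A B C) (cyc3 A B D) (cyc3 A C D) (cyc3 B C D) => [] [] [] [].
Qed.

Lemma oriented_rot (X Y Z : {set 'I_n}) (k : nat) :
  oriented (rot k [:: X; Y; Z]) = oriented [:: X; Y; Z].
Proof. by case: (rot_seq3 X Y Z k) => -> //=; rewrite cyc3_rot // cyc3_rot. Qed.

Lemma oriented_mirror (X Y Z : {set 'I_n}) :
  separates3 X Y Z -> oriented [:: Y; X; Z] = ~~ oriented [:: X; Y; Z].
Proof.
rewrite /= /separates3 /splits /cyc3.
move: (a \in X) (a \in Y) (a \in Z) (b \in X) (b \in Y) (b \in Z)
  (c \in X) (c \in Y) (c \in Z).
by do 9!case.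
Qed.

Lemma cyc3_merge_last (A B C D : {set 'I_n}) :
  separates3 A B (C :|: D) -> cyc3 A B (C :|: D) = cyc4 A B C D.
Proof.
rewrite /separates3 /splits /cyc4 /cyc3 !inE.
move: (a \in A) (a \in B) (a \in C) (a \in D) (b \in A) (b \in B) (b \in C)
  (b \in D) (c \in A) (c \in B) (c \in C) (c \in D).
by do 12!case.
Qed.

(* Up to rotating both the 3-part and the 4-part partition, each of the four
   merges of an edge is the merge of its last two parts. *)
Lemma cyc3_merge (A B C D X Y Z : {set 'I_n}) :
  [:: X; Y; Z] \in merges A B C D -> separates3 X Y Z ->
  cyc3 X Y Z = cyc4 A B C D.
Proof.
rewrite !inE => /or4P[] /eqP[-> -> ->];
  [ rewrite -separates3_rot -cyc3_rot -2!cyc4_rot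
  | rewrite -2!separates3_rot -2!cyc3_rot -3!cyc4_rot
  |
  | rewrite -separates3_rot -cyc3_rot -cyc4_rot ];
  exact: cyc3_merge_last.
Qed.

End Orientation.

Section HeavyTriple.
Variables (R : realFieldType) (n : nat) (l : 'I_n -> R).
Hypothesis l_ge0 : forall i, 0 <= l i.

Lemma short_heavy_pair (x y : 'I_n) (A : {set 'I_n}) :
  x != y -> Ltotal l / 2%:R < l x + l y -> short l A -> ~~ ((x \in A) && (y \in A)).
Proof.
rewrite /short => xy heavy shortA; apply/negP => /andP[xA yA].
have : l x + l y <= \sum_(i in A) l i.
  rewrite (bigD1 x) //= (bigD1 y) /=; last by rewrite yA eq_sym.
  by rewrite addrA lerDl sumr_ge0.
lra.
Qed.

Lemma admissible_separates3 (a b c : 'I_n) :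
  a != b -> a != c -> b != c ->
  Ltotal l / 2%:R < l a + l b -> Ltotal l / 2%:R < l a + l c ->
  Ltotal l / 2%:R < l b + l c ->
  forall X Y Z, admissible l [:: X; Y; Z] -> separates3 a b c X Y Z.
Proof.
move=> ab ac bc hab hac hbc X Y Z /andP[/andP[_ /eqP cover] /=].
rewrite andbT => /and3P[sX sY sZ].
have covered x : [|| x \in X, x \in Y | x \in Z].
  by have := in_setT x; rewrite -cover !big_cons big_nil !inE orbF.
have short_splits A : short l A -> splits a b c A.
  by move=> sA; rewrite /splits !negb_or !short_heavy_pair.
by rewrite /separates3 !covered !short_splits.
Qed.

End HeavyTriple.

Section Invariance.
Variables (R : realFieldType) (n : nat) (l : 'I_n -> R) (a b c : 'I_n).
Hypothesis adm_sep :
  forall X Y Z, admissible l [:: X; Y; Z] -> separates3 a b c X Y Z.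

Lemma incident_oriented (A B C D : {set 'I_n}) (s : seq {set 'I_n}) :
  incident l A B C D s -> oriented a b c s = cyc4 a b c A B C D.
Proof.
case=> m mAD [adm_m [k ->]].
have [X [Y [Z em]]] : exists X Y Z, m = [:: X; Y; Z].
  by move: mAD; rewrite !inE => /or4P[] /eqP->; do 3!eexists.
move: mAD adm_m; rewrite em oriented_rot => mAD /adm_sep.
exact: cyc3_merge.
Qed.

Lemma gstep_oriented (s t : seq {set 'I_n}) :
  gstep l s t -> oriented a b c s = oriented a b c t.
Proof.
case=> [[A [B [C [D [_ [inc_s inc_t]]]]]] | [[size_s _] [k ->]]].
  by rewrite (incident_oriented inc_s) (incident_oriented inc_t).
by case: s size_s => [|X [|Y [|Z []]]] // _; rewrite oriented_rot.
Qed.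

Lemma gconnected_oriented (s t : seq {set 'I_n}) :
  gconnected l s t -> oriented a b c s = oriented a b c t.
Proof. by elim=> [x y /gstep_oriented | | x y z _ -> _ ->]. Qed.

End Invariance.

Theorem mainTheorem7 (R : realFieldType) (n : nat) (l : 'I_n -> R)
  (hn : (4 <= n)%N)
  (hpos : forall i, 0 < l i)
  (htri : forall i, l i < \sum_(j | j != i) l j)
  (hgen : forall J : {set 'I_n}, \sum_(i in J) l i != \sum_(i in ~: J) l i)
  (a b c : 'I_n)
  (hab : a != b) (hac : a != c) (hbc : b != c)
  (hla : l b <= l a) (hlb : l c <= l b)
  (hmax : forall i, i != a -> i != b -> i != c -> l i <= l c)
  (hbig : Ltotal l / 2%:R < l b + l c) :
  forall I J K : {set 'I_n}, vertex l [:: I; J; K] ->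
    ~ gconnected l [:: I; J; K] [:: J; I; K].
Proof.
have l_ge0 i : 0 <= l i by apply: ltW.
have heavy_ab : Ltotal l / 2%:R < l a + l b by lra.
have heavy_ac : Ltotal l / 2%:R < l a + l c by lra.
have adm_sep := admissible_separates3 l_ge0 hab hac hbc heavy_ab heavy_ac hbig.
move=> I J K [_ adm_IJK] /(gconnected_oriented adm_sep).
rewrite [oriented a b c [:: J; I; K]]oriented_mirror ?adm_sep //.
by case: (oriented a b c [:: I; J; K]).
Qed.
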